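(* In any $(m_A,m_B,2,2)$-scenario, every unbiased quantum behavior is a Gram-Lorentz behavior.
   Context: In an $(m_A,m_B,o_A,o_B)$-scenario a behavior is a vector $\mathbf{p}=(p(ab|xy))$ indexed by $a\in[o_A]$, $b\in[o_B]$, $x\in[m_A]$, $y\in[m_B]$ (for $o_A=o_B=2$ the outcomes are labelled $a,b\in\{\pm1\}$). It is quantum if there exist $d\ge1$, a Hermitian positive semidefinite trace-one matrix $\rho$ on $\mathbb{C}^d\otimes\mathbb{C}^d$, and for each $x$ Hermitian psd $d\times d$ matrices $\{M_{a|x}\}_a$ with $\sum_aM_{a|x}=I_d$, and for each $y$ Hermitian psd $d\times d$ matrices $\{N_{b|y}\}_b$ with $\sum_bN_{b|y}=I_d$, such that $p(ab|xy)=\mathrm{Tr}((M_{a|x}\otimes N_{b|y})\rho)$ for all $a,b,x,y$. For quantum behaviors the marginals $p_A(a|x):=\sum_bp(ab|xy)$ and $p_B(b|y):=\sum_ap(ab|xy)$ do not depend on $y$, resp. $x$; in the binary-outcome case $\mathbf{p}$ is unbiased if $p_A(a|x)=p_B(b|y)=1/2$ for all $a,b,x,y$. Let $N:=m_Ao_A+m_Bo_B$ and let $\mathcal{A}(\mathbf{p})$ be the set of real symmetric $N\times N$ matrices $R$ indexed by $([m_A]\times[o_A])\cup([m_B]\times[o_B])$ with $\sum_{a,a'}R_{xa,x'a'}=1$ for all $x,x'\in[m_A]$, $\sum_{a,b}R_{xa,yb}=1$ for all $x\in[m_A],y\in[m_B]$, $\sum_{b,b'}R_{yb,y'b'}=1$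 for all $y,y'\in[m_B]$, and $R_{xa,yb}=p(ab|xy)$ for all $a,b,x,y$. With the Lorentz cone $\mathcal{L}_m:=\{(c,x)\in\mathbb{R}\times\mathbb{R}^{m-1}:c\ge\|x\|\}$, a matrix is Gram-Lorentz if it is the Gram matrix of vectors in some $\mathcal{L}_m$. A quantum behavior $\mathbf{p}$ is a Gram-Lorentz behavior if there exists a Gram-Lorentz matrix $R\in\mathcal{A}(\mathbf{p})$. *)

From HB Require Import structures.
From mathcomp Require Import all_boot all_order all_algebra.
From mathcomp Require Import complex mxtens.
From mathcomp Require Import reals.
Set Implicit Arguments. Unset Strict Implicit. Unset Printing Implicit Defensive.
Import Order.TTheory GRing.Theory Num.Theory.
Local Open Scope ring_scope.

(* A behavior in an (mA,mB,oA,oB)-scenario: p a b x y = p(ab|xy). *)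
Definition behavior (R : realType) (mA mB oA oB : nat) :=
  'I_oA -> 'I_oB -> 'I_mA -> 'I_mB -> R.

Definition adjmx (R : realType) (m n : nat) (A : 'M[R[i]]_(m, n)) : 'M[R[i]]_(n, m) :=
  (map_mx Num.conj A)^T.

Definition hermitian (R : realType) (d : nat) (A : 'M[R[i]]_d) : Prop :=
  adjmx A = A.

Definition psd (R : realType) (d : nat) (A : 'M[R[i]]_d) : Prop :=
  hermitian A /\ forall v : 'cV[R[i]]_d, 0 <= (adjmx v *m A *m v) 0 0.

Definition density (R : realType) (d : nat) (rho : 'M[R[i]]_(d * d)) : Prop :=
  psd rho /\ \tr rho = 1.

Definition povm (R : realType) (d o : nat) (M : 'I_o -> 'M[R[i]]_d) : Prop :=
  (forall a, psd (M a)) /\ \sum_(a < o) M a = 1%:M.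

Definition quantum_behavior (R : realType) (mA mB oA oB : nat)
  (p : behavior R mA mB oA oB) : Prop :=
  exists (d : nat) (rho : 'M[R[i]]_(d * d))
         (M : 'I_mA -> 'I_oA -> 'M[R[i]]_d) (N : 'I_mB -> 'I_oB -> 'M[R[i]]_d),
    [/\ (0 < d)%N, density rho, (forall x, povm (M x)), (forall y, povm (N y)) &
      forall a b x y, real_complex R (p a b x y) = \tr ((M x a *t N y b) *m rho)].

Definition unbiased (R : realType) (mA mB : nat) (p : behavior R mA mB 2 2) : Prop :=
  (forall a x y, \sum_(b < 2) p a b x y = 2^-1) /\
  (forall b x y, \sum_(a < 2) p a b x y = 2^-1).

Definition idx (mA mB oA oB : nat) : finType :=
  (('I_mA * 'I_oA) + ('I_mB * 'I_oB))%type.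

Definition in_A (R : realType) (mA mB oA oB : nat) (p : behavior R mA mB oA oB)
  (Rm : idx mA mB oA oB -> idx mA mB oA oB -> R) : Prop :=
  [/\ (forall i j, Rm i j = Rm j i),
      (forall x x' : 'I_mA,
          \sum_(a < oA) \sum_(a' < oA) Rm (inl (x, a)) (inl (x', a')) = 1),
      (forall (x : 'I_mA) (y : 'I_mB),
          \sum_(a < oA) \sum_(b < oB) Rm (inl (x, a)) (inr (y, b)) = 1),
      (forall y y' : 'I_mB,
          \sum_(b < oB) \sum_(b' < oB) Rm (inr (y, b)) (inr (y', b')) = 1) &
      (forall a b x y, Rm (inl (x, a)) (inr (y, b)) = p a b x y)].

Definition lorentz (R : realType) (k : nat) (v : 'rV[R]_k.+1) : Prop :=
  Num.sqrt (\sum_(i < k) v 0 (lift ord0 i) ^+ 2) <= v 0 ord0.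

Definition gram_lorentz (R : realType) (T : finType) (Rm : T -> T -> R) : Prop :=
  exists (k : nat) (v : T -> 'rV[R]_k.+1),
    (forall t, lorentz (v t)) /\
    forall s t, Rm s t = \sum_(l < k.+1) v s 0 l * v t 0 l.

Definition gram_lorentz_behavior (R : realType) (mA mB oA oB : nat)
  (p : behavior R mA mB oA oB) : Prop :=
  quantum_behavior p /\
  exists Rm : idx mA mB oA oB -> idx mA mB oA oB -> R, in_A p Rm /\ gram_lorentz Rm.

From HB Require Import structures.
From mathcomp Require Import all_boot all_order all_algebra.
From mathcomp Require Import complex mxtens reals.
From mathcomp Require Import ring lra.
Set Implicit Arguments. Unset Strict Implicit. Unset Printing Implicit Defensive.
Import Order.TTheory GRing.Theory Num.Theory.
Local Open Scope ring_scope.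

(* Write rho = L L^* and, for the binary measurements, A_x = M_{0|x} - M_{1|x}
   and B_y = N_{0|y} - N_{1|y}.  Since M_0 + M_1 = 1, the defect
   1 - A^2 = 4 (M_1 M_0 M_1 + M_0 M_1 M_0) is positive, so A is a contraction and
   the vectors u_x = (A_x (x) 1) L and v_y = (1 (x) B_y) L lie in the unit ball of
   the real Hilbert-Schmidt space, while <u_x, v_y> = Tr((A_x (x) B_y) rho) is the
   correlator E_xy.  For an unbiased behavior p(ab|xy) = (1 + ab E_xy) / 4, so the
   matrix with entries (1 + a a' <w_s, w_t>) / 4, where w ranges over the u_x and
   v_y, lies in A(p); it is the Gram matrix of the vectors (1/2, a w_s / 2), which
   are in the Lorentz cone because |w_s| <= 1. *)

Lemma big_ord2 (V : nmodType) (F : 'I_2 -> V) :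
  \sum_(a < 2) F a = F ord0 + F ord_max.
Proof. by rewrite big_ord_recr big_ord1; congr (F _ + _); apply: val_inj. Qed.

Lemma ord2_cases (a : 'I_2) : a = ord0 \/ a = ord_max.
Proof. by case: a => -[|[|//]] a_lt2; [left | right]; apply: val_inj. Qed.

Definition binobs (V : zmodType) (M : 'I_2 -> V) : V := M ord0 - M ord_max.

Lemma biadditive_binobs (U V : zmodType) (W : comNzRingType) (f : U -> V -> W)
    (M : 'I_2 -> U) (N : 'I_2 -> V) :
  (forall A A' B, f (A - A') B = f A B - f A' B) ->
  (forall A B B', f A (B - B') = f A B - f A B') ->
  f (binobs M) (binobs N) =
  \sum_(a < 2) \sum_(b < 2) (-1) ^+ a * (-1) ^+ b * f (M a) (N b).
Proof.
move=> fBl fBr; rewrite /binobs fBl !fBr !big_ord2 /= !expr0 !expr1.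
ring.
Qed.

Section MatrixAlgebra.
Variable R : pzRingType.

Lemma mulmxMn m n p (A : 'M[R]_(m, n)) (B : 'M[R]_(n, p)) k l :
  (A *+ k) *m (B *+ l) = (A *m B) *+ (k * l).
Proof. by rewrite mulrnA -(raddfMn (mulmxr B)) -(raddfMn (mulmx (A *+ k))). Qed.

Lemma tensmxBl m n p q (A B : 'M[R]_(m, n)) (D : 'M[R]_(p, q)) :
  (A - B) *t D = A *t D - B *t D.
Proof. by apply/matrixP=> i j; rewrite !mxE mulrBl. Qed.

Lemma tensmxBr m n p q (A : 'M[R]_(m, n)) (B D : 'M[R]_(p, q)) :
  A *t (B - D) = A *t B - A *t D.
Proof. by apply/matrixP=> i j; rewrite !mxE mulrBr. Qed.

Lemma tensmx11 m n : (1%:M : 'M[R]_m) *t (1%:M : 'M[R]_n) = 1%:M.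
Proof.
apply/matrixP=> i j.
case: (mxtens_indexP i) => i1 i2; case: (mxtens_indexP j) => j1 j2.
rewrite tensmxE !mxE (inj_eq (can_inj (@mxtens_indexK m n))) xpair_eqE.
by case: (i1 == j1); case: (i2 == j2); rewrite ?mulr1 ?mulr0 ?mul0r.
Qed.

End MatrixAlgebra.

Lemma povm2_defect (R : comNzRingType) n (M0 M1 : 'M[R]_n.+1) : M0 + M1 = 1 ->
  1 - (M0 - M1) ^+ 2 = (M1 * M0 * M1 + M0 * M1 * M0) *+ 4.
Proof.
move=> sumM; have -> : M1 = 1 - M0 by rewrite -sumM addrAC subrr add0r.
(* both sides are polynomials in M0, so the identity can be checked in {poly R} *)
have defect_poly : 1 - ('X - (1 - 'X)) ^+ 2 =
    ((1 - 'X) * 'X * (1 - 'X) + 'X * (1 - 'X) * 'X) *+ 4 :> {poly R} by ring.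
have := congr1 (horner_mx M0) defect_poly.
by rewrite !(rmorphB, rmorphM, rmorphD, rmorphMn, rmorphXn, rmorph1) /= horner_mx_X.
Qed.

Section ConjugateTranspose.
Variable R : realType.
Local Notation C := R[i].

Lemma adjmxK m n (A : 'M[C]_(m, n)) : adjmx (adjmx A) = A.
Proof. by apply/matrixP=> i j; rewrite !mxE conjCK. Qed.

Lemma adjmx_mul m n p (A : 'M[C]_(m, n)) (B : 'M[C]_(n, p)) :
  adjmx (A *m B) = adjmx B *m adjmx A.
Proof. by rewrite /adjmx map_mxM trmx_mul. Qed.

Lemma adjmxB m n (A B : 'M[C]_(m, n)) : adjmx (A - B) = adjmx A - adjmx B.
Proof. by rewrite /adjmx map_mxB linearB. Qed.

Lemma adjmxMn m n (A : 'M[C]_(m, n)) k : adjmx (A *+ k) = adjmx A *+ k.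
Proof. by apply/matrixP=> i j; rewrite !(mxE, mulmxnE) rmorphMn. Qed.

Lemma adjmx1 n : adjmx (1%:M : 'M[C]_n) = 1%:M.
Proof. by rewrite /adjmx map_mx1 trmx1. Qed.

Lemma adjmx_tens m n p q (A : 'M[C]_(m, n)) (B : 'M[C]_(p, q)) :
  adjmx (A *t B) = adjmx A *t adjmx B.
Proof. by rewrite /adjmx map_mxT trmx_tens. Qed.

Lemma adjmx_row_mx m n1 n2 (A : 'M[C]_(m, n1)) (B : 'M[C]_(m, n2)) :
  adjmx (row_mx A B) = col_mx (adjmx A) (adjmx B).
Proof. by rewrite /adjmx map_row_mx tr_row_mx. Qed.

End ConjugateTranspose.

Section HilbertSchmidt.
Variable R : realType.
Local Notation C := R[i].

Lemma ReB (x y : C) : complex.Re (x - y) = complex.Re x - complex.Re y.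
Proof. exact: (raddfB (@complex.Re R : Rcomplex R -> R)). Qed.

Lemma Re_sum (I : Type) (r : seq I) (P : pred I) (F : I -> C) :
  complex.Re (\sum_(i <- r | P i) F i) = \sum_(i <- r | P i) complex.Re (F i).
Proof. exact: (raddf_sum (@complex.Re R : Rcomplex R -> R)). Qed.

Lemma Re_conjM (a b : C) :
  complex.Re (Num.conj a * b) =
  complex.Re a * complex.Re b + complex.Im a * complex.Im b.
Proof. by case: a b => a1 a2 [b1 b2] /=; ring. Qed.

Definition hsdot m n (U V : 'M[C]_(m, n)) : R :=
  complex.Re (\tr (adjmx U *m V)).

Definition mxcoord m n (U : 'M[C]_(m, n)) (t : 'I_m * 'I_n * bool) : R :=
  let: (i, j, re) := t in if re then complex.Re (U i j) else complex.Im (U i j).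

Lemma hsdot_coord m n (U V : 'M[C]_(m, n)) :
  hsdot U V = \sum_t mxcoord U t * mxcoord V t.
Proof.
transitivity
  (\sum_i \sum_j \sum_(re : bool) mxcoord U (i, j, re) * mxcoord V (i, j, re)).
  rewrite /hsdot /mxtrace Re_sum [RHS]exchange_big.
  apply: eq_bigr => j _; rewrite mxE Re_sum; apply: eq_bigr => i _.
  by rewrite big_bool !mxE Re_conjM.
by rewrite pair_bigA pair_bigA; apply: eq_bigr => -[[i j] re].
Qed.

Lemma hsdotC m n (U V : 'M[C]_(m, n)) : hsdot U V = hsdot V U.
Proof. by rewrite !hsdot_coord; apply: eq_bigr => t _; rewrite mulrC. Qed.

Lemma hsdot_ge0 m n (U : 'M[C]_(m, n)) : 0 <= hsdot U U.
Proof. by rewrite hsdot_coord; apply: sumr_ge0 => t _; rewrite -expr2 sqr_ge0. Qed.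

End HilbertSchmidt.

Section Positivity.
Variable R : realType.
Local Notation C := R[i].

Lemma psd_factor n (A : 'M[C]_n) : psd A -> exists L : 'M[C]_n, A = L *m adjmx L.
Proof.
move=> [A_herm A_pos].
have adj_trC m k (X : 'M[C]_(m, k)) : adjmx X = (X ^t Num.conj)%sesqui.
  by rewrite /adjmx map_trmx.
have /hermitian_normalmx/orthomx_spectralP : A \is hermsymmx.
  by apply/is_hermitianmxP; rewrite expr0 scale1r -adj_trC A_herm.
set P := spectralmx A; set sp := spectral_diag A.
have P_unitary : P *m adjmx P = 1%:M.
  by rewrite adj_trC; apply/unitarymxP/spectral_unitarymx.
rewrite invmx_unitary ?spectral_unitarymx // -adj_trC => AE.
have sp_ge0 i : 0 <= sp 0 i.
  have := A_pos (adjmx (row i P)); rewrite adjmxK AE !mulmxA -row_mul P_unitary.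
  rewrite (rowE i P) adjmx_mul !mulmxA -(mulmxA _ P) P_unitary mulmx1 rowE mulmx1.
  rewrite mul_mx_diag !mxE (bigD1 i) //= big1 ?addr0.
    by rewrite !mxE !eqxx /= mul1r rmorph1 mulr1.
  by move=> j ji; rewrite !mxE (negbTE ji) /= !mul0r.
have sqrt_sp_herm : adjmx (diag_mx (map_mx sqrtC sp)) = diag_mx (map_mx sqrtC sp).
  apply/matrixP => a b; rewrite !mxE eq_sym.
  case: eqP => [->|_]; last by rewrite !mulr0n rmorph0.
  by rewrite !mulr1n conj_Creal // sqrtC_real.
exists (adjmx P *m diag_mx (map_mx sqrtC sp)).
rewrite adjmx_mul adjmxK sqrt_sp_herm AE -!mulmxA (mulmxA (diag_mx _)) mulmx_diag.
by congr (_ *m (diag_mx _ *m _)); apply/rowP => j; rewrite !mxE -expr2 sqrtCK.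
Qed.

End Positivity.

Section Contraction.
Variable R : realType.
Local Notation C := R[i].

Definition contraction n (K : 'M[C]_n) : Prop :=
  exists k (P : 'M[C]_(n, k)), 1%:M - adjmx K *m K = P *m adjmx P.

Lemma contraction_hsdot n k (K : 'M[C]_n) (L : 'M[C]_(n, k)) :
  contraction K -> hsdot (K *m L) (K *m L) <= hsdot L L.
Proof.
move=> [l [P defectE]]; rewrite -subr_ge0 /hsdot -ReB -linearB /=.
have -> : adjmx L *m L - adjmx (K *m L) *m (K *m L) =
          adjmx (adjmx P *m L) *m (adjmx P *m L).
  rewrite (adjmx_mul (adjmx P)) adjmxK -mulmxA (mulmxA P) -defectE.
  by rewrite mulmxBl mul1mx mulmxBr adjmx_mul !mulmxA.
exact: hsdot_ge0.
Qed.

Lemma contraction_tensl n m (A : 'M[C]_n) :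
  contraction A -> contraction (A *t (1%:M : 'M[C]_m)).
Proof.
move=> [k [P defectE]]; exists (k * m)%N, (P *t 1%:M).
by rewrite !adjmx_tens adjmx1 !tensmx_mul !mulmx1 -defectE tensmxBl tensmx11.
Qed.

Lemma contraction_tensr n m (B : 'M[C]_n) :
  contraction B -> contraction ((1%:M : 'M[C]_m) *t B).
Proof.
move=> [k [P defectE]]; exists (m * k)%N, (1%:M *t P).
by rewrite !adjmx_tens adjmx1 !tensmx_mul !mulmx1 -defectE tensmxBr tensmx11.
Qed.

Lemma adjmx_binobs n (M : 'I_2 -> 'M[C]_n) : povm M -> adjmx (binobs M) = binobs M.
Proof. by move=> [M_psd _]; rewrite adjmxB (M_psd ord0).1 (M_psd ord_max).1. Qed.

Lemma povm2_contraction n (M : 'I_2 -> 'M[C]_n.+1) : povm M -> contraction (binobs M).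
Proof.
move=> M_povm; have [M_psd M_sum] := M_povm.
have [Q0 M0E] := psd_factor (M_psd ord0).
have [Q1 M1E] := psd_factor (M_psd ord_max).
have [M0_herm M1_herm] := ((M_psd ord0).1, (M_psd ord_max).1).
have sumM : M ord0 + M ord_max = 1 by rewrite -big_ord2 M_sum.
exists (n.+1 + n.+1)%N, (row_mx (M ord_max *m Q0) (M ord0 *m Q1) *+ 2).
rewrite (adjmx_binobs M_povm) adjmxMn adjmx_row_mx !adjmx_mul M0_herm M1_herm.
rewrite mulmxMn -[1%:M]/(1 : 'M[C]_n.+1) mulmxE -expr2 povm2_defect //.
congr (_ *+ _); rewrite mul_row_col.
by rewrite {1}M0E {3}M1E !mulmxE !mulrA.
Qed.

End Contraction.

Section BinaryBehaviors.
Variables (R : realType) (mA mB : nat).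
Implicit Type p : behavior R mA mB 2 2.

Definition correlator p x y : R :=
  \sum_(a < 2) \sum_(b < 2) (-1) ^+ a * (-1) ^+ b * p a b x y.

Definition setting (t : idx mA mB 2 2) : 'I_mA + 'I_mB :=
  match t with inl (x, _) => inl x | inr (y, _) => inr y end.

Definition outcome_sign (t : idx mA mB 2 2) : R :=
  match t with inl (_, a) | inr (_, a) => (-1) ^+ a end.

Lemma unbiased_entry p a b x y : unbiased p ->
  p a b x y = (1 + (-1) ^+ a * (-1) ^+ b * correlator p x y) / 4.
Proof.
move=> [pA pB]; have := pA ord0 x y; have := pA ord_max x y.
have := pB ord0 x y; have := pB ord_max x y.
rewrite /correlator !big_ord2 /= !expr0 !expr1.
by case: (ord2_cases a) => ->; case: (ord2_cases b) => -> /=; rewrite ?expr0 ?expr1; lra.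
Qed.

Lemma unbiased_in_A p (G : 'I_mA + 'I_mB -> 'I_mA + 'I_mB -> R) :
  unbiased p -> (forall s t, G s t = G t s) ->
  (forall x y, G (inl x) (inr y) = correlator p x y) ->
  in_A p (fun s t =>
    (1 + outcome_sign s * outcome_sign t * G (setting s) (setting t)) / 4).
Proof.
move=> p_unbiased G_sym G_corr; split.
- by move=> s t; rewrite G_sym [outcome_sign s * _]mulrC.
- by move=> x x'; rewrite !big_ord2 /= !expr0 !expr1; lra.
- by move=> x y; rewrite !big_ord2 /= !expr0 !expr1; lra.
- by move=> y y'; rewrite !big_ord2 /= !expr0 !expr1; lra.
- by move=> a b x y; rewrite G_corr -unbiased_entry.
Qed.

End BinaryBehaviors.
Arguments outcome_sign {R mA mB} t.

Section GramLorentz.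
Variable R : realType.

Lemma gram_lorentz_ball (T I : finType) (w : T -> I -> R) (Rm : T -> T -> R) :
  (forall t, \sum_i w t i ^+ 2 <= 1) ->
  (forall s t, Rm s t = (1 + \sum_i w s i * w t i) / 4) ->
  gram_lorentz Rm.
Proof.
move=> w_le1 RmE.
pose v t : 'rV[R]_#|I|.+1 :=
  \row_l (if unlift ord0 l is Some j then w t (enum_val j) / 2 else 1 / 2).
have v_head t : v t 0 ord0 = 1 / 2 by rewrite mxE unlift_none.
have v_tail t (i : 'I_#|I|) : v t 0 (lift ord0 i) = w t (enum_val i) / 2.
  by rewrite mxE liftK.
have sum_enum (F : I -> R) : \sum_(j < #|I|) F (enum_val j) = \sum_i F i.
  by rewrite -big_enum_val; apply: eq_bigl.
exists #|I|, v; split=> [t | s t].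
  rewrite /lorentz v_head.
  under eq_bigr => i _ do rewrite v_tail expr_div_n.
  rewrite -mulr_suml (sum_enum (fun i => w t i ^+ 2)).
  have -> : 1 / 2 = Num.sqrt ((1 / 2) ^+ 2) :> R by rewrite sqrtr_sqr ger0_norm //; lra.
  by rewrite ler_sqrt ?sqr_ge0 //; have := w_le1 t; lra.
rewrite big_ord_recl !v_head.
under eq_bigr => i _ do rewrite !v_tail mulrACA.
by rewrite -mulr_suml (sum_enum (fun i => w s i * w t i)) RmE; field.
Qed.

Lemma gram_lorentz_signed (T : finType) m n (e : T -> R) (w : T -> 'M[R[i]]_(m, n)) :
  (forall t, e t ^+ 2 = 1) -> (forall t, hsdot (w t) (w t) <= 1) ->
  gram_lorentz (fun s t => (1 + e s * e t * hsdot (w s) (w t)) / 4).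
Proof.
move=> e_sign w_le1.
have signed_coord s t :
    \sum_i (e s * mxcoord (w s) i) * (e t * mxcoord (w t) i) =
    e s * e t * hsdot (w s) (w t).
  by rewrite hsdot_coord mulr_sumr; apply: eq_bigr => i _; rewrite mulrACA.
apply: (gram_lorentz_ball (w := fun t i => e t * mxcoord (w t) i)) => [t | s t].
  under eq_bigr do rewrite expr2.
  by rewrite signed_coord -expr2 e_sign mul1r.
by rewrite signed_coord.
Qed.

End GramLorentz.

Section QuantumRealization.
Variables (R : realType) (mA mB d k : nat) (p : behavior R mA mB 2 2).
Local Notation C := R[i].
Variables (M : 'I_mA -> 'I_2 -> 'M[C]_d.+1) (N : 'I_mB -> 'I_2 -> 'M[C]_d.+1).
Variable L : 'M[C]_(d.+1 * d.+1, k).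
Hypotheses (M_povm : forall x, povm (M x)) (N_povm : forall y, povm (N y)).
Hypothesis tr_LL : \tr (L *m adjmx L) = 1.
Hypothesis pE : forall a b x y,
  real_complex R (p a b x y) = \tr ((M x a *t N y b) *m (L *m adjmx L)).

Definition obsvec (s : 'I_mA + 'I_mB) : 'M[C]_(d.+1 * d.+1, k) :=
  match s with
  | inl x => (binobs (M x) *t 1%:M) *m L
  | inr y => (1%:M *t binobs (N y)) *m L
  end.

Lemma obsvec_le1 s : hsdot (obsvec s) (obsvec s) <= 1.
Proof.
have hsdotLL : hsdot L L = 1 by rewrite /hsdot mxtrace_mulC tr_LL.
rewrite -hsdotLL; case: s => [x | y]; apply: contraction_hsdot.
  exact/contraction_tensl/povm2_contraction.
exact/contraction_tensr/povm2_contraction.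
Qed.

Lemma obsvec_correlator x y :
  hsdot (obsvec (inl x)) (obsvec (inr y)) = correlator p x y.
Proof.
rewrite /= /hsdot adjmx_mul adjmx_tens adjmx1 adjmx_binobs //.
rewrite mulmxA -(mulmxA _ (_ *t 1%:M)) tensmx_mul mulmx1 mul1mx.
rewrite mxtrace_mulC mulmxA mxtrace_mulC.
pose f A B := complex.Re (\tr ((A *t B) *m (L *m adjmx L))).
have fBl A A' B : f (A - A') B = f A B - f A' B.
  by rewrite /f tensmxBl mulmxBl raddfB ReB.
have fBr A B B' : f A (B - B') = f A B - f A B'.
  by rewrite /f tensmxBr mulmxBl raddfB ReB.
rewrite -/(f _ _) biadditive_binobs //.
by apply: eq_bigr => a _; apply: eq_bigr => b _; rewrite /f -pE.
Qed.

End QuantumRealization.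

Theorem theorem4p12 (R : realType) (mA mB : nat) (p : behavior R mA mB 2 2) :
  quantum_behavior p -> unbiased p -> gram_lorentz_behavior p.
Proof.
move=> p_quantum p_unbiased; split=> //.
have [[|d] [rho [M [N [//= _ [rho_psd tr_rho] M_povm N_povm pE]]]]] := p_quantum.
have [L rhoE] := psd_factor rho_psd.
rewrite {}rhoE in tr_rho pE.
pose G s t := hsdot (obsvec M N L s) (obsvec M N L t).
exists (fun s t =>
  (1 + outcome_sign s * outcome_sign t * G (setting s) (setting t)) / 4).
split.
  apply: unbiased_in_A => // [s t | x y]; first exact: hsdotC.
  exact: obsvec_correlator.
apply: gram_lorentz_signed => t; first by case: t => -[? a]; rewrite sqrr_sign.
exact: obsvec_le1.
Qed.
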